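(* Let $A_1,\ldots,A_N$ be real matrices, each with columns of Euclidean norm $1$, and let $k\in\mathbb{N}$. Then \[ \delta_k^{A_1\otimes\cdots\otimes A_N}\ge\max_{1\le i\le N}\delta_k^{A_i}. \]
   Context: $\otimes$ denotes the Kronecker product: for $A\in\mathbb{R}^{p,q}$, $B\in\mathbb{R}^{r,s}$, $A\otimes B\in\mathbb{R}^{pr,qs}$ is the block matrix with $(i,j)$ block $a_{i,j}B$. For $x\in\mathbb{R}^n$, $\|x\|_0$ is the number of nonzero entries of $x$. For a matrix $C\in\mathbb{R}^{m,n}$ with columns of Euclidean norm $1$, the $k$-restricted isometry constant $\delta_k^{C}$ is the smallest number $\delta$ such that $(1-\delta)\|x\|_2^2\le\|Cx\|_2^2\le(1+\delta)\|x\|_2^2$ for all $x\in\mathbb{R}^n$ with $\|x\|_0\le k$. *)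

From mathcomp Require Import all_boot all_order all_algebra.
From mathcomp Require Import reals.
From mathcomp Require Export mxtens.
Set Implicit Arguments. Unset Strict Implicit. Unset Printing Implicit Defensive.
Import Order.TTheory GRing.Theory Num.Theory.
Local Open Scope ring_scope.

Record mat (R : Type) := Mat { mrows : nat; mcols : nat; mval : 'M[R]_(mrows, mcols) }.
Arguments Mat {R mrows mcols}.

(* Iterated Kronecker product A_1 (x) A_2 (x) ... (x) A_N, using the standard
   Kronecker product [tensmx] of mathcomp-real-closed (row index i1*p + i2). *)
Fixpoint kronl (R : pzRingType) (s : seq (mat R)) : mat R :=
  match s with
  | [::] => Mat (1%:M : 'M[R]_1)
  | [:: A] => A
  | A :: s' => let B := kronl s' in Mat (tensmx (mval A) (mval B))
  end.

Definition kron_family (R : pzRingType) (N : nat) (m n : 'I_N -> nat)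
  (A : forall i : 'I_N, 'M[R]_(m i, n i)) : mat R :=
  kronl [seq Mat (A i) | i <- enum 'I_N].

Definition sqnorm (R : pzRingType) (p : nat) (x : 'cV[R]_p) : R :=
  \sum_(i < p) (x i 0) ^+ 2.

Definition l0 (R : pzRingType) (p : nat) (x : 'cV[R]_p) : nat :=
  #|[set i : 'I_p | x i 0 != 0]|.

Definition RIP_bound (R : realFieldType) (p q : nat) (C : 'M[R]_(p, q)) (k : nat) (d : R) :=
  forall x : 'cV[R]_q, (l0 x <= k)%N ->
    (1 - d) * sqnorm x <= sqnorm (C *m x) /\ sqnorm (C *m x) <= (1 + d) * sqnorm x.

Definition is_RIC (R : realFieldType) (p q : nat) (C : 'M[R]_(p, q)) (k : nat) (d : R) :=
  RIP_bound C k d /\ forall d', RIP_bound C k d' -> d <= d'.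

Definition unit_columns (R : realFieldType) (p q : nat) (C : 'M[R]_(p, q)) :=
  forall j : 'I_q, \sum_(i < p) (C i j) ^+ 2 = 1.

From mathcomp Require Import all_boot all_order all_algebra.
From mathcomp Require Import reals.
Import Order.TTheory GRing.Theory Num.Theory.
Local Open Scope ring_scope.

(* If every column of B has norm 1, then x |-> x (x) e_j preserves sparsity
   and |x|^2, and sends |A x|^2 to |A x|^2 |B e_j|^2 = |A x|^2, since
   (A (x) B)(x (x) e_j) = A x (x) B e_j; symmetrically for e_j (x) x.  So every
   test vector of a factor is matched by a test vector of the Kronecker product,
   every RIP constant of the product is one of each factor, and the smallest
   such constant of the product dominates that of each factor.  A matrix with
   no columns has no smallest RIP constant, which rules out empty factors. *)

Section Tensor.
Context {R : idomainType}.

Lemma l0_tens {p q} (u : 'cV[R]_p) (v : 'cV[R]_q) :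
  l0 (u *t v : 'cV_(p * q)) = (l0 u * l0 v)%N.
Proof.
rewrite /l0 -cardsX -(card_imset _ (can_inj (@mxtens_indexK p q))).
apply: eq_card => k; case: (mxtens_indexP k) => i j.
rewrite mem_imset; last exact: can_inj (@mxtens_indexK p q).
rewrite !inE mxE mxtens_indexK mulf_eq0 negb_or.
by rewrite !(ord1 (mxtens_unindex _).1) !(ord1 (mxtens_unindex _).2).
Qed.

Lemma l0_delta {q} (j : 'I_q) : l0 (delta_mx j 0 : 'cV[R]_q) = 1%N.
Proof.
rewrite /l0 -[RHS](cards1 j); apply: eq_card => i.
by rewrite !inE mxE eqxx andbT; case: (i == j); rewrite ?oner_eq0 ?eqxx.
Qed.

Lemma sqnorm_tens {p q} (u : 'cV[R]_p) (v : 'cV[R]_q) :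
  sqnorm (u *t v : 'cV_(p * q)) = sqnorm u * sqnorm v.
Proof.
rewrite /sqnorm mulr_sum; apply: eq_bigr => k _.
by rewrite mxE exprMn !(ord1 (mxtens_unindex _).1) !(ord1 (mxtens_unindex _).2).
Qed.

Lemma sqnorm_delta {q} (j : 'I_q) : sqnorm (delta_mx j 0 : 'cV[R]_q) = 1.
Proof.
rewrite /sqnorm (bigD1 j) //= big1 ?addr0 => [|i /negbTE ij].
  by rewrite mxE !eqxx expr1n.
by rewrite mxE ij expr0n.
Qed.

End Tensor.

Section SparseEmbedding.
Context {R : realFieldType}.

Lemma sqnorm_mul_delta {p q} (C : 'M[R]_(p, q)) (j : 'I_q) :
  unit_columns C -> sqnorm (C *m delta_mx j 0) = 1.
Proof.
move=> unitC; rewrite -(unitC j) /sqnorm; apply: eq_bigr => i _.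
by rewrite -colE mxE.
Qed.

Lemma unit_columns_tens {p q p' q'} (A : 'M[R]_(p, q)) (B : 'M[R]_(p', q')) :
  unit_columns A -> unit_columns B -> unit_columns (A *t B).
Proof.
move=> unitA unitB j; case: (mxtens_indexP j) => j1 j2.
rewrite -(mul1r 1) -{1}(unitA j1) -(unitB j2) mulr_sum; apply: eq_bigr => k _.
by rewrite mxE mxtens_indexK exprMn.
Qed.

Definition embeds_sparsely {p q p' q'} (C : 'M[R]_(p, q)) (D : 'M[R]_(p', q')) :=
  forall x : 'cV[R]_q, exists y : 'cV[R]_q',
    [/\ (l0 y <= l0 x)%N, sqnorm y = sqnorm x & sqnorm (D *m y) = sqnorm (C *m x)].

Lemma embeds_sparsely_refl {p q} (C : 'M[R]_(p, q)) : embeds_sparsely C C.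
Proof. by move=> x; exists x. Qed.

Lemma embeds_sparsely_trans {p1 q1 p2 q2 p3 q3} {C1 : 'M[R]_(p1, q1)}
    {C2 : 'M[R]_(p2, q2)} {C3 : 'M[R]_(p3, q3)} :
  embeds_sparsely C1 C2 -> embeds_sparsely C2 C3 -> embeds_sparsely C1 C3.
Proof.
move=> e12 e23 x; have [y [l0y ny Cy]] := e12 x; have [z [l0z nz Cz]] := e23 y.
by exists z; split; [exact: leq_trans l0y | rewrite nz | rewrite Cz].
Qed.

Lemma embeds_sparsely_tensl {p q p' q'} (A : 'M[R]_(p, q)) {B : 'M[R]_(p', q')} :
  unit_columns B -> (0 < q')%N -> embeds_sparsely A (A *t B).
Proof.
move=> unitB q'_gt0 x; pose e : 'cV[R]_q' := delta_mx (Ordinal q'_gt0) 0.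
exists (x *t e : 'cV_(q * q')).
rewrite l0_tens l0_delta muln1 !sqnorm_tens sqnorm_delta mulr1.
by rewrite (tensmx_mul A B x e) sqnorm_tens sqnorm_mul_delta // mulr1.
Qed.

Lemma embeds_sparsely_tensr {p q p' q'} {A : 'M[R]_(p, q)} (B : 'M[R]_(p', q')) :
  unit_columns A -> (0 < q)%N -> embeds_sparsely B (A *t B).
Proof.
move=> unitA q_gt0 x; pose e : 'cV[R]_q := delta_mx (Ordinal q_gt0) 0.
exists (e *t x : 'cV_(q * q')).
rewrite l0_tens l0_delta mul1n !sqnorm_tens sqnorm_delta mul1r.
by rewrite (tensmx_mul A B e x) sqnorm_tens sqnorm_mul_delta // mul1r.
Qed.

Lemma RIP_bound_embeds {p q p' q'} {C : 'M[R]_(p, q)} {D : 'M[R]_(p', q')} {k d} :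
  embeds_sparsely C D -> RIP_bound D k d -> RIP_bound C k d.
Proof.
move=> eCD ripD x l0x; have [y [l0y <- <-]] := eCD x.
exact: ripD (leq_trans l0y l0x).
Qed.

Lemma is_RIC_le_embeds {p q p' q'} {C : 'M[R]_(p, q)} {D : 'M[R]_(p', q')} {k c d} :
  embeds_sparsely C D -> is_RIC C k c -> is_RIC D k d -> c <= d.
Proof. move=> eCD [_ minC] [ripD _]; exact: minC (RIP_bound_embeds eCD ripD). Qed.

(* With no columns every vector is zero, so d - 1 would be a smaller constant. *)
Lemma is_RIC_ncols_gt0 {p q} {C : 'M[R]_(p, q)} {k d} : is_RIC C k d -> (0 < q)%N.
Proof.
case: q C => // C [_ minC].
have sqnorm0 r : sqnorm (0 : 'cV[R]_r) = 0.
  by rewrite /sqnorm big1 // => i _; rewrite mxE expr0n.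
have: d <= d - 1.
  apply: minC => x _; have -> : x = 0 by apply/matrixP => -[].
  by rewrite mulmx0 !sqnorm0 !mulr0.
by rewrite lerDl oppr_ge0 ler10.
Qed.

Section Kronecker.
Context {I : eqType} {f : I -> mat R}.
Hypothesis unit_f : forall i, unit_columns (mval (f i)).

Lemma unit_columns_kronl (s : seq I) : unit_columns (mval (kronl (map f s))).
Proof.
elim: s => [|i [|i' s] IH] /=; last exact: unit_columns_tens.
- by move=> j; rewrite big_ord1 (ord1 j) mxE eqxx expr1n.
- exact: unit_f.
Qed.

Lemma embeds_sparsely_kronl (s : seq I) i : i \in s ->
  (0 < mcols (kronl (map f s)))%N -> embeds_sparsely (mval (f i)) (mval (kronl (map f s))).
Proof.
elim: s => [|j [|j' s] IH] //.
  by rewrite mem_seq1 => /eqP-> _; apply: embeds_sparsely_refl.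
set K := kronl (map f (j' :: s)) in IH *.
have -> : kronl (map f [:: j, j' & s]) = Mat (mval (f j) *t mval K) by [].
have unitK : unit_columns (mval K) by exact: unit_columns_kronl.
clearbody K.
rewrite inE /= muln_gt0 => /orP[/eqP-> | i_s] /andP[fj_gt0 K_gt0].
  exact: embeds_sparsely_tensl _ unitK K_gt0.
apply: embeds_sparsely_trans (IH i_s K_gt0) _.
exact: embeds_sparsely_tensr _ (unit_f j) fj_gt0.
Qed.

End Kronecker.

End SparseEmbedding.

Theorem corollary3p9 (R : realType) (N : nat) (m n : 'I_N -> nat)
  (A : forall i : 'I_N, 'M[R]_(m i, n i)) (k : nat) :
  (forall i, unit_columns (A i)) ->
  forall d : R, is_RIC (mval (kron_family A)) k d ->
  forall (i : 'I_N) (di : R), is_RIC (A i) k di -> di <= d.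
Proof.
move=> unitA d ricK i di ricAi.
apply: (is_RIC_le_embeds _ ricAi ricK).
have unitF j : unit_columns (mval (Mat (A j))) := unitA j.
apply: (embeds_sparsely_kronl unitF); first by rewrite mem_enum.
exact: is_RIC_ncols_gt0 ricK.
Qed.
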